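(* Let $I_A$ and $I_B$ be two MatP instances with the same underlying graph that differ only in the preference order of a single agent $x$. Let $M$ be a matching that leaves $x$ unmatched. Then (1) $M$ is popular for $I_A$ if and only if $M$ is popular for $I_B$, and (2) $M$ is dominant for $I_A$ if and only if $M$ is dominant for $I_B$.
   Context: An instance $I$ of matchings under preferences (MatP) consists of a bipartite graph $G^I=(W\cup F,E^I)$ with disjoint finite vertex sets $W$ (workers) and $F$ (firms), whose elements are called agents, together with, for each agent $x$, a strict linear order $\succ_x^I$ over the set $N_x^I$ of neighbors of $x$ in $G^I$. A matching is a set of pairwise disjoint edges; $M(x)$ denotes the partner of a matched agent $x$. Agent $x$ prefers $M$ over $M'$ if $x$ is matched in $M$ and unmatched in $M'$, or matched in both with $M(x)\succ_x M'(x)$. Define $\mathrm{vote}^I_x(M,M')=1$ if $x$ prefers $M$ over $M'$, $-1$ if $x$ prefers $M'$ over $M$, and $0$ otherwise, and $\phi^I(M,M')=\sum_{x\in W\cup F}\mathrm{vote}^I_x(M,M')$. A matching $M$ of $G^I$ is popular for $I$ if $\phi^I(M,M')\ge 0$ for every matching $M'$ of $G^I$; it is dominant for $I$ if it is popular and $\phi^I(M,M')>0$ for every matching $M'$ of $G^I$ with $|M'|>|M|$. *)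

From mathcomp Require Import all_boot all_order all_algebra.
Set Implicit Arguments. Unset Strict Implicit. Unset Printing Implicit Defensive.
Import Order.TTheory GRing.Theory Num.Theory.

(* Workers are the elements of a finType T, firms those of a finType U;
   agents are elements of the disjoint union T + U. *)
Section MatP.
Variables (T U : finType).
Local Notation agent := (T + U)%type.

Definition adj (E : {set T * U}) (x y : agent) : bool :=
  match x, y with
  | inl w, inr f => (w, f) \in E
  | inr f, inl w => (w, f) \in E
  | _, _ => false
  end.

(* pref x a b  means  a >_x b. Outside N_x it is irrelevant. *)
Definition valid_prefs (E : {set T * U}) (pref : agent -> rel agent) : Prop :=
  forall x : agent,
    (forall a, adj E x a -> ~~ pref x a a) /\
    (forall a b c, adj E x a -> adj E x b -> adj E x c ->
        pref x a b -> pref x b c -> pref x a c) /\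
    (forall a b, adj E x a -> adj E x b -> a != b -> pref x a b || pref x b a).

Definition is_matching (E : {set T * U}) (M : {set T * U}) : Prop :=
  M \subset E /\
  (forall e1 e2, e1 \in M -> e2 \in M -> e1 != e2 ->
     (e1.1 != e2.1) && (e1.2 != e2.2)).

Definition partner (M : {set T * U}) (x y : agent) : bool :=
  match x, y with
  | inl w, inr f => (w, f) \in M
  | inr f, inl w => (w, f) \in M
  | _, _ => false
  end.

Definition matched (M : {set T * U}) (x : agent) : bool :=
  [exists y, partner M x y].

(* x prefers M over M': x matched in M, and either unmatched in M' or
   M(x) >_x M'(x). *)
Definition prefers (pref : agent -> rel agent) (M M' : {set T * U}) (x : agent)
  : bool :=
  [exists y, partner M x y && [forall y', partner M' x y' ==> pref x y y']].

Definition vote (pref : agent -> rel agent) (M M' : {set T * U}) (x : agent)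
  : int :=
  if prefers pref M M' x then 1%R
  else if prefers pref M' M x then (-1)%R else 0%R.

Definition phi (pref : agent -> rel agent) (M M' : {set T * U}) : int :=
  (\sum_(x : agent) vote pref M M' x)%R.

Definition popular (E : {set T * U}) (pref : agent -> rel agent)
  (M : {set T * U}) : Prop :=
  is_matching E M /\
  forall M', is_matching E M' -> (0 <= phi pref M M')%R.

Definition dominant (E : {set T * U}) (pref : agent -> rel agent)
  (M : {set T * U}) : Prop :=
  popular E pref M /\
  forall M', is_matching E M' -> #|M| < #|M'| -> (0 < phi pref M M')%R.

End MatP.

From mathcomp Require Import all_boot all_order all_algebra.

Set Implicit Arguments.
Unset Strict Implicit.

(* An agent x unmatched in M never prefers M, and prefers M' over M exactly when
   it is matched in M', whatever its preference order; every other agent only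
   compares its partners, i.e. neighbours, where the two profiles agree. Hence
   phi(M, M') is the same in both instances, and popularity and dominance, being
   conditions on phi alone, transfer. *)

Section SinglePreferenceChange.
Variables (T U : finType) (E : {set T * U}).
Local Notation agent := (T + U)%type.

Lemma partner_adj (M : {set T * U}) (y a : agent) :
  M \subset E -> partner M y a -> adj E y a.
Proof.
by move=> /subsetP sME; case: y => [w|f]; case: a => [w'|f'] //=; apply: sME.
Qed.

Lemma partnerF_unmatched (M : {set T * U}) (x y : agent) :
  ~~ matched M x -> partner M x y = false.
Proof. by move=> /existsPn/(_ y)/negbTE. Qed.

Lemma prefersF_unmatched {pref : agent -> rel agent} {M M' : {set T * U}} {x} :
  ~~ matched M x -> prefers pref M M' x = false.
Proof.
by move=> nmx; apply/existsPn => y; rewrite partnerF_unmatched.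
Qed.

Lemma prefers_unmatched {pref : agent -> rel agent} {M M' : {set T * U}} {x} :
  ~~ matched M x -> prefers pref M' M x = matched M' x.
Proof.
move=> nmx; apply: eq_existsb => y.
suff -> : [forall y', partner M x y' ==> pref x y y'] by rewrite andbT.
by apply/forallP => y'; rewrite partnerF_unmatched.
Qed.

Lemma prefers_local (pA pB : agent -> rel agent) (M M' : {set T * U}) y :
  M \subset E -> M' \subset E ->
  (forall a b, adj E y a -> adj E y b -> pA y a b = pB y a b) ->
  prefers pA M M' y = prefers pB M M' y.
Proof.
move=> sME sM'E eq_pref_y; apply: eq_existsb => a.
case Ma: (partner M y a) => //=; apply: eq_forallb => b.
case M'b: (partner M' y b) => //=.
by apply: eq_pref_y; [apply: partner_adj Ma | apply: partner_adj M'b].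
Qed.

Variables (pA pB : agent -> rel agent) (x : agent).
Hypothesis eq_pref : forall y, y != x -> forall a b, adj E y a -> adj E y b ->
  pA y a b = pB y a b.

Lemma phi_unmatched (M M' : {set T * U}) :
  M \subset E -> M' \subset E -> ~~ matched M x -> phi pA M M' = phi pB M M'.
Proof.
move=> sME sM'E nmx; apply: eq_bigr => y _; rewrite /vote.
have [->|nyx] := eqVneq y x.
  by rewrite !(prefersF_unmatched nmx) !(prefers_unmatched nmx).
by rewrite (prefers_local sME sM'E (eq_pref nyx)) (prefers_local sM'E sME (eq_pref nyx)).
Qed.

End SinglePreferenceChange.

Section SamePhi.
Variables (T U : finType) (E M : {set T * U}) (pA pB : (T + U)%type -> rel (T + U)%type).
Hypothesis phi_eq : forall M', is_matching E M' -> phi pA M M' = phi pB M M'.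

Lemma popular_same_phi : popular E pA M <-> popular E pB M.
Proof.
by split=> -[mM pop]; split=> // M' mM'; [rewrite -phi_eq | rewrite phi_eq]; auto.
Qed.

Lemma dominant_same_phi : dominant E pA M <-> dominant E pB M.
Proof.
split=> -[/popular_same_phi pop dom]; split=> // M' mM';
  [rewrite -phi_eq | rewrite phi_eq]; auto.
Qed.

End SamePhi.

Theorem lemma3 (T U : finType) (E : {set T * U})
  (prefA prefB : (T + U)%type -> rel (T + U)%type) (x : (T + U)%type)
  (M : {set T * U}) :
  valid_prefs E prefA ->
  valid_prefs E prefB ->
  (* I_A and I_B differ only in the preference order of agent x *)
  (forall y, y != x -> forall a b, adj E y a -> adj E y b ->
     prefA y a b = prefB y a b) ->
  is_matching E M ->
  ~~ matched M x ->
  (popular E prefA M <-> popular E prefB M) /\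
  (dominant E prefA M <-> dominant E prefB M).
Proof.
move=> _ _ eq_pref [sME _] nmx.
have phi_eq M' : is_matching E M' -> phi prefA M M' = phi prefB M M'.
  by move=> [sM'E _]; exact: (phi_unmatched eq_pref sME sM'E nmx).
by split; [apply: popular_same_phi | apply: dominant_same_phi].
Qed.
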